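(* Let $p\in\mathbb{Z}[X]$ be a non-constant polynomial with nonnegative coefficients, and let $n_k=p(k)$ for $k\ge0$. Then $(n_k)_{k\ge0}$ is not a rigidity sequence: there is no continuous Borel probability measure $\sigma$ on $\mathbb{T}$ with $\hat\sigma(n_k)\to1$.
   Context: $\hat\sigma(n)=\int_{\mathbb{T}}\lambda^n\,d\sigma(\lambda)$; continuous means atomless. A strictly increasing sequence $(n_k)$ of positive integers is a rigidity sequence if there exist a probability space and a measure-preserving transformation $\varphi$ that is weakly mixing and rigid with respect to $(n_k)$ (i.e. $\mu(\varphi^{-n_k}(A)\triangle A)\to0$ for all measurable $A$); equivalently, if there exists a continuous probability measure $\sigma$ on $\mathbb{T}$ with $\hat\sigma(n_k)\to1$. *)

(* T is identified with [0,1) via x |-> exp(2 pi i x) (a Borel isomorphism). *)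
From Stdlib Require Import Reals List.
Open Scope R_scope.

Inductive borel : (R -> Prop) -> Prop :=
| borel_interval (a b : R) : borel (fun x => a < x < b)
| borel_compl (A : R -> Prop) : borel A -> borel (fun x => ~ A x)
| borel_union (A : nat -> R -> Prop) :
    (forall n, borel (A n)) -> borel (fun x => exists n, A n x)
| borel_ext (A B : R -> Prop) : (forall x, A x <-> B x) -> borel A -> borel B.

(* A Borel probability measure on T = [0,1) (values on non-Borel sets are irrelevant). *)
Definition is_prob_measure_T (mu : (R -> Prop) -> R) : Prop :=
  (forall A, borel A -> 0 <= mu A) /\
  (forall A : nat -> R -> Prop,
      (forall n, borel (A n)) ->
      (forall m n x, m <> n -> A m x -> A n x -> False) ->
      infinite_sum (fun n => mu (A n)) (mu (fun x => exists n, A n x))) /\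
  mu (fun x => 0 <= x < 1) = 1 /\
  mu (fun x => ~ (0 <= x < 1)) = 0.

(* continuous = atomless *)
Definition atomless (mu : (R -> Prop) -> R) : Prop :=
  forall x : R, mu (fun y => y = x) = 0.

(* Integral over T of a continuous f w.r.t. mu, as limit of Riemann-Stieltjes
   sums over the uniform partitions [j/(N+1), (j+1)/(N+1)), j = 0..N. *)
Definition rs_sum (mu : (R -> Prop) -> R) (f : R -> R) (N : nat) : R :=
  sum_f_R0 (fun j => f (INR j / INR (S N)) *
     mu (fun x => INR j / INR (S N) <= x < INR (S j) / INR (S N))) N.

Definition integral_T (mu : (R -> Prop) -> R) (f : R -> R) (l : R) : Prop :=
  Un_cv (rs_sum mu f) l.

(* hat sigma(n) = re + i im, where lambda = exp(2 pi i x). *)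
Definition fourier_coeff (mu : (R -> Prop) -> R) (n : nat) (re im : R) : Prop :=
  integral_T mu (fun x => cos (2 * PI * INR n * x)) re /\
  integral_T mu (fun x => sin (2 * PI * INR n * x)) im.

(* Polynomials with nonnegative integer coefficients: coefficient list, lowest degree first. *)
Definition peval (cs : list nat) (k : nat) : nat :=
  fold_right (fun c acc => (c + k * acc)%nat) 0%nat cs.

Definition nonconstant (cs : list nat) : Prop :=
  exists i, (1 <= i)%nat /\ nth i cs 0%nat <> 0%nat.

(* Write D(n) = 1 - Re hat-sigma(n) = int (1 - cos 2 pi n x) d sigma.  The elementary inequality
   D(m - n) <= 2 D(m) + 2 D(n) shows that "D(f k) -> 0" passes from a sequence f to its
   difference sequence.  For n_k = p(k) the d-th difference, d = deg p, is the positive constant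
   c = d! * lead(p), so D(c) = 0: sigma is carried by the c-th roots of unity, and hence has atoms.
   Integrals are only available as limits of Riemann-Stieltjes sums over uniform partitions, so
   D(c) = 0 is used on partitions of mesh 1/(cKL), where the sum dominates 1 - cos(2 pi / K) times
   the mass of the points at angular distance >= 2 pi/(cK) from the c-th roots of unity. *)

From Stdlib Require Import Reals ZArith List Lra Lia.
From Stdlib Require Import Classical FunctionalExtensionality PropExtensionality.
Open Scope R_scope.

Lemma pred_ext (A B : R -> Prop) : (forall x, A x <-> B x) -> A = B.
Proof.
  intros H; apply functional_extensionality; intro x; apply propositional_extensionality, H.
Qed.

Lemma floor_nat (x : R) : 0 <= x -> exists j : nat, INR j <= x < INR j + 1.
Proof.
  intros Hx. destruct (base_Int_part x) as [H1 H2].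
  assert (Hz : (-1 < Int_part x)%Z) by (apply lt_IZR; lra).
  exists (Z.to_nat (Int_part x)). rewrite INR_IZR_INZ, Z2Nat.id by lia. lra.
Qed.

Lemma scaled_Ico_iff (c a b x : R) : 0 < c -> (a / c <= x < b / c <-> a <= c * x < b).
Proof.
  intros Hc.
  assert (c * (a / c) = a) by (field; lra). assert (c * (b / c) = b) by (field; lra).
  split; intros []; split; nra.
Qed.

Lemma sum_f_R0_const (e : R) (n : nat) : sum_f_R0 (fun _ => e) n = INR (S n) * e.
Proof. induction n as [|n IH]; simpl sum_f_R0; [simpl; ring|rewrite IH, (S_INR (S n)); ring]. Qed.

Lemma infinite_sum_const (e : R) : infinite_sum (fun _ => e) e -> e = 0.
Proof.
  intros H. destruct (Req_dec e 0) as [|He]; [assumption|exfalso].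
  destruct (H (Rabs e)) as [N HN]; [apply Rabs_pos_lt, He|].
  specialize (HN (S N) ltac:(lia)). unfold Rdist in HN.
  rewrite sum_f_R0_const in HN.
  replace (INR (S (S N)) * e - e) with (INR (S N) * e) in HN by (rewrite (S_INR (S N)); ring).
  rewrite Rabs_mult, Rabs_right in HN by (apply Rle_ge, pos_INR).
  assert (1 <= INR (S N)) by (rewrite S_INR; pose proof (pos_INR N); lra).
  pose proof (Rabs_pos e). nra.
Qed.

Lemma infinite_sum_eventually_zero (f : nat -> R) (N : nat) (l : R) :
  (forall n, (N < n)%nat -> f n = 0) -> infinite_sum f l -> l = sum_f_R0 f N.
Proof.
  intros Hz Hs. apply (uniqueness_sum f); [exact Hs|].
  intros eps Heps. exists N. intros n Hn.
  replace (sum_f_R0 f n) with (sum_f_R0 f N).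
  - unfold Rdist. rewrite Rminus_diag, Rabs_R0. lra.
  - induction Hn as [|n Hn IH]; [reflexivity|]. simpl. rewrite <- IH, Hz by lia. ring.
Qed.

Lemma borel_empty : borel (fun _ => False).
Proof.
  apply (borel_ext (fun x => 0 < x < 0)); [intros x; split; [lra|tauto]|apply borel_interval].
Qed.

Lemma borel_or (A B : R -> Prop) : borel A -> borel B -> borel (fun x => A x \/ B x).
Proof.
  intros HA HB.
  apply (borel_ext (fun x => exists n, (match n with O => A | _ => B end) x)).
  - intros x; split.
    + intros [[|n] H]; auto.
    + intros [H|H]; [exists O|exists 1%nat]; auto.
  - apply borel_union. intros [|n]; auto.
Qed.

Lemma borel_and (A B : R -> Prop) : borel A -> borel B -> borel (fun x => A x /\ B x).
Proof.
  intros HA HB. apply (borel_ext (fun x => ~ (~ A x \/ ~ B x))); [intros x; tauto|].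
  apply borel_compl, borel_or; apply borel_compl; assumption.
Qed.

Lemma borel_guard (P : Prop) (A : R -> Prop) : (P -> borel A) -> borel (fun x => P /\ A x).
Proof.
  intros HA. destruct (classic P) as [Hp|Hp].
  - apply (borel_ext A); [tauto|auto].
  - apply (borel_ext (fun _ => False)); [tauto|apply borel_empty].
Qed.

Lemma borel_lt (b : R) : borel (fun x => x < b).
Proof.
  apply (borel_ext (fun x => exists n : nat, b - INR n - 1 < x < b)).
  - intros x; split; [intros [n Hn]; lra|intros H].
    destruct (INR_archimed 1 (b - x)) as [n Hn]; [lra|]. exists n. lra.
  - apply borel_union. intros n; apply borel_interval.
Qed.

Lemma borel_gt (a : R) : borel (fun x => a < x).
Proof.
  apply (borel_ext (fun x => exists n : nat, a < x < a + INR n + 1)).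
  - intros x; split; [intros [n Hn]; lra|intros H].
    destruct (INR_archimed 1 (x - a)) as [n Hn]; [lra|]. exists n. lra.
  - apply borel_union. intros n; apply borel_interval.
Qed.

Lemma borel_Ico (a b : R) : borel (fun x => a <= x < b).
Proof.
  apply (borel_ext (fun x => ~ (x < a) /\ x < b)); [intros x; split; intros; lra|].
  apply borel_and; [apply borel_compl|]; apply borel_lt.
Qed.

Lemma borel_scaled_Ico (c a b : R) : 0 < c -> borel (fun x => a <= c * x < b).
Proof.
  intros Hc. apply (borel_ext (fun x => a / c <= x < b / c)); [|apply borel_Ico].
  intros x. apply scaled_Ico_iff, Hc.
Qed.

Lemma borel_point (a : R) : borel (fun x => x = a).
Proof.
  apply (borel_ext (fun x => ~ (x < a) /\ ~ (a < x))); [intros x; split; intros; lra|].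
  apply borel_and; apply borel_compl; [apply borel_lt|apply borel_gt].
Qed.

Section ProbabilityMeasure.

Variable mu : (R -> Prop) -> R.
Hypothesis Hmu : is_prob_measure_T mu.

Lemma mu_ge0 (A : R -> Prop) : borel A -> 0 <= mu A.
Proof. destruct Hmu as [H _]; auto. Qed.

Lemma mu_Ico01 : mu (fun x => 0 <= x < 1) = 1.
Proof. destruct Hmu as [_ [_ [H _]]]; exact H. Qed.

Lemma mu_empty : mu (fun _ => False) = 0.
Proof.
  destruct Hmu as [_ [Hadd _]].
  specialize (Hadd (fun _ _ => False) (fun _ => borel_empty) ltac:(tauto)).
  cbv beta in Hadd.
  replace (fun x : R => exists _ : nat, False) with (fun _ : R => False) in Hadd
    by (apply pred_ext; intros x; split; [tauto|intros [_ []]]).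
  exact (infinite_sum_const _ Hadd).
Qed.

Lemma mu_finite_union (A : nat -> R -> Prop) (N : nat) :
  (forall j, borel (A j)) ->
  (forall i j x, i <> j -> (i <= N)%nat -> (j <= N)%nat -> A i x -> A j x -> False) ->
  mu (fun x => exists j, (j <= N)%nat /\ A j x) = sum_f_R0 (fun j => mu (A j)) N.
Proof.
  intros HB HD. destruct Hmu as [_ [Hadd _]].
  specialize (Hadd (fun j x => (j <= N)%nat /\ A j x)
                (fun j => borel_guard _ _ (fun _ => HB j))
                ltac:(intros m n x Hmn [Hm Am] [Hn An]; eapply HD; eauto)).
  cbv beta in Hadd.
  assert (Hz : forall n, (N < n)%nat -> mu (fun x => (n <= N)%nat /\ A n x) = 0).
  { intros n Hn. rewrite <- mu_empty. f_equal. apply pred_ext. intros x. lia. }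
  rewrite (infinite_sum_eventually_zero _ N _ Hz Hadd).
  apply sum_eq. intros i Hi. f_equal. apply pred_ext. intros x; tauto.
Qed.

Lemma mu_le (A B : R -> Prop) :
  borel A -> borel B -> (forall x, A x -> B x) -> mu A <= mu B.
Proof.
  intros HA HB Hsub.
  pose (F := fun j => match j with O => A | _ => (fun x => B x /\ ~ A x) end).
  assert (HF : forall j, borel (F j)).
  { intros [|j]; simpl; auto. apply borel_and; auto. apply borel_compl; auto. }
  assert (E : B = (fun x => exists j, (j <= 1)%nat /\ F j x)).
  { apply pred_ext. intros x; split.
    - intros Hx. destruct (classic (A x)).
      + exists O; simpl; auto.
      + exists 1%nat; simpl; auto.
    - intros [[|[|j]] [Hj Hx]]; simpl in Hx; [apply Hsub, Hx|tauto|lia]. }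
  rewrite E, mu_finite_union by (auto; intros [|[|i]] [|[|j]] x; simpl; try lia; tauto).
  simpl. pose proof (mu_ge0 (F 1%nat) (HF 1%nat)). simpl in *. lra.
Qed.

Lemma mu_null_union (Z : nat -> R -> Prop) :
  (forall n, borel (Z n)) -> (forall n, mu (Z n) = 0) -> mu (fun x => exists n, Z n x) = 0.
Proof.
  intros HB H0.
  pose (D := fun n x => Z n x /\ ~ (exists i, (i < n)%nat /\ Z i x)).
  assert (HD : forall n, borel (D n)).
  { intros n. apply borel_and; auto. apply borel_compl, borel_union.
    intros i. apply borel_guard; auto. }
  assert (HD0 : forall n, mu (D n) = 0).
  { intros n. apply Rle_antisym; [|apply mu_ge0; auto].
    rewrite <- (H0 n). apply mu_le; auto. intros x [Hx _]; auto. }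
  replace (fun x => exists n, Z n x) with (fun x => exists n, D n x).
  - destruct Hmu as [_ [Hadd _]].
    rewrite (infinite_sum_eventually_zero (fun n => mu (D n)) 0 _ (fun n _ => HD0 n)).
    + apply HD0.
    + apply Hadd; [exact HD|]. intros m n x Hmn [Hm Nm] [Hn Nn].
      destruct (Nat.lt_gt_cases m n) as [[Hlt|Hlt] _]; auto; [apply Nn|apply Nm]; eauto.
  - apply pred_ext. intros x; split; [intros [n [Hn _]]; eauto|intros [n Hn]].
    induction n as [n IH] using lt_wf_ind.
    destruct (classic (exists i, (i < n)%nat /\ Z i x)) as [[i [Hi Zi]]|Hno].
    + exact (IH i Hi Zi).
    + exists n. split; auto.
Qed.

Lemma mu_null_or (A B : R -> Prop) :
  borel A -> borel B -> mu A = 0 -> mu B = 0 -> mu (fun x => A x \/ B x) = 0.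
Proof.
  intros HA HB HA0 HB0.
  pose (F := fun n => match n with O => A | _ => B end).
  replace (fun x => A x \/ B x) with (fun x => exists n, F n x).
  - apply mu_null_union; intros [|n]; assumption.
  - apply pred_ext. intros x; split.
    + intros [[|n] H]; auto.
    + intros [H|H]; [exists O|exists 1%nat]; assumption.
Qed.

End ProbabilityMeasure.
Definition cell (N j : nat) : R -> Prop :=
  fun x => INR j / INR (S N) <= x < INR (S j) / INR (S N).

Lemma cell_iff (N j : nat) (x : R) : cell N j x <-> INR j <= INR (S N) * x < INR j + 1.
Proof. unfold cell. rewrite scaled_Ico_iff, (S_INR j); [tauto|apply lt_0_INR; lia]. Qed.

Lemma borel_cell (N j : nat) : borel (cell N j).
Proof. apply borel_Ico. Qed.

Lemma cell_disjoint (N i j : nat) (x : R) : i <> j -> cell N i x -> cell N j x -> False.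
Proof.
  rewrite !cell_iff. intros Hij Hi Hj.
  destruct (Nat.lt_gt_cases i j) as [[H|H] _]; auto;
    apply le_INR in H; rewrite S_INR in H; lra.
Qed.

Lemma cells_cover (N : nat) (x : R) : 0 <= x < 1 <-> exists j, (j <= N)%nat /\ cell N j x.
Proof.
  pose proof (lt_0_INR (S N) ltac:(lia)) as HN. split.
  - intros [H0 H1]. destruct (floor_nat (INR (S N) * x)) as [j Hj]; [nra|].
    exists j. split; [|apply cell_iff; lra].
    assert (INR j < INR (S N)) as Hlt by nra. apply INR_lt in Hlt. lia.
  - intros [j [Hj Hx]]. apply cell_iff in Hx. apply le_INR in Hj.
    rewrite S_INR in Hx. pose proof (pos_INR j). split; nra.
Qed.

Section RiemannStieltjesSums.

Variable mu : (R -> Prop) -> R.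
Hypothesis Hmu : is_prob_measure_T mu.

Lemma mu_cells (A : nat -> R -> Prop) (N : nat) :
  (forall j, borel (A j)) -> (forall j x, A j x -> cell N j x) ->
  mu (fun x => exists j, (j <= N)%nat /\ A j x) = sum_f_R0 (fun j => mu (A j)) N.
Proof.
  intros HB Hsub. apply mu_finite_union; auto.
  intros i j x Hij _ _ Hi Hj. exact (cell_disjoint N i j x Hij (Hsub i x Hi) (Hsub j x Hj)).
Qed.

Lemma rs_sum_one (N : nat) : rs_sum mu (fun _ => 1) N = 1.
Proof.
  transitivity (mu (fun x => 0 <= x < 1)); [|apply mu_Ico01, Hmu]. unfold rs_sum.
  replace (fun x => 0 <= x < 1) with (fun x => exists j, (j <= N)%nat /\ cell N j x)
    by (apply pred_ext; intros x; symmetry; apply cells_cover).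
  rewrite mu_cells; auto using borel_cell.
  apply sum_eq. intros j _. apply Rmult_1_l.
Qed.

Lemma rs_sum_markov (f : R -> R) (eta : R) (N : nat) : (forall x, 0 <= f x) ->
  eta * mu (fun x => exists j, (j <= N)%nat /\ (eta <= f (INR j / INR (S N)) /\ cell N j x))
  <= rs_sum mu f N.
Proof.
  intros Hf.
  rewrite mu_cells by (intros; try apply borel_guard; intros; auto using borel_cell; tauto).
  unfold rs_sum. rewrite scal_sum. apply sum_Rle. intros j _.
  pose proof (mu_ge0 mu Hmu _ (borel_cell N j)) as Hcell. unfold cell in Hcell.
  pose proof (Hf (INR j / INR (S N))).
  destruct (classic (eta <= f (INR j / INR (S N)))) as [Hle|Hgt].
  - replace (fun x => eta <= f (INR j / INR (S N)) /\ cell N j x) with (cell N j)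
      by (apply pred_ext; intros x; tauto).
    unfold cell. nra.
  - replace (fun x => eta <= f (INR j / INR (S N)) /\ cell N j x) with (fun _ : R => False)
      by (apply pred_ext; intros x; tauto).
    rewrite (mu_empty mu Hmu). nra.
Qed.

End RiemannStieltjesSums.

Definition defect (mu : (R -> Prop) -> R) (n N : nat) : R :=
  rs_sum mu (fun x => 1 - cos (2 * PI * INR n * x)) N.

(* Squared form of |a - b| <= |a - 1| + |b - 1| for a, b on the unit circle. *)
Lemma one_sub_cos_sub_le (u v : R) : 1 - cos (u - v) <= 2 * (1 - cos u) + 2 * (1 - cos v).
Proof.
  rewrite cos_minus. pose proof (sin2_cos2 u). pose proof (sin2_cos2 v). unfold Rsqr in *.
  pose proof (Rle_0_sqr (cos u - 1 + (cos v - 1))). pose proof (Rle_0_sqr (sin u + sin v)).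
  unfold Rsqr in *. nra.
Qed.

Lemma cos_away_from_integers (K m : nat) (t : R) : (2 <= K)%nat ->
  INR m + / INR K <= t <= INR m + 1 - / INR K -> cos (2 * PI * t) <= cos (2 * PI / INR K).
Proof.
  intros HK Ht. pose proof PI_RGT_0.
  assert (HK' : 2 <= INR K) by (apply (le_INR 2) in HK; simpl in HK; lra).
  assert (HiK : 0 < / INR K <= / 2)
    by (split; [apply Rinv_0_lt_compat|apply Rinv_le_contravar]; lra).
  set (s := t - INR m).
  replace (cos (2 * PI * t)) with (cos (2 * PI * s)).
  2:{ replace (2 * PI * t) with (2 * PI * s + 2 * INR m * PI) by (unfold s; ring).
      symmetry; apply cos_period. }
  replace (2 * PI / INR K) with (2 * PI * / INR K) by (unfold Rdiv; ring).
  destruct (Rle_or_lt s (1/2)) as [Hs|Hs].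
  - apply cos_decr_1; unfold s in *; nra.
  - replace (cos (2 * PI * s)) with (cos (2 * PI * (1 - s))).
    + apply cos_decr_1; unfold s in *; nra.
    + replace (2 * PI * (1 - s)) with (- (2 * PI * s) + 2 * INR 1 * PI) by (simpl; ring).
      rewrite cos_period, cos_neg. reflexivity.
Qed.

Lemma one_sub_cos_pos (K : nat) : (2 <= K)%nat -> 0 < 1 - cos (2 * PI / INR K).
Proof.
  intros HK. pose proof PI_RGT_0.
  assert (HK' : 2 <= INR K) by (apply (le_INR 2) in HK; simpl in HK; lra).
  assert (Hr : 0 < 2 * PI / INR K <= PI).
  { split; [apply Rdiv_lt_0_compat; lra|].
    assert (INR K * (2 * PI / INR K) = 2 * PI) by (field; lra). nra. }
  pose proof (cos_decreasing_1 0 (2 * PI / INR K)) as Hc. rewrite cos_0 in Hc. lra.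
Qed.

(* Points of [0,1) at angular distance >= 2 pi/(cK) from the c-th roots of unity. *)
Definition away_from_roots (c K : nat) : R -> Prop :=
  fun x => exists m, (m < c)%nat /\ INR m + / INR K <= INR c * x < INR m + 1 - / INR K.

Lemma borel_away_from_roots (c K : nat) : borel (away_from_roots c K).
Proof.
  apply borel_union. intros m. apply borel_guard. intros Hm.
  apply borel_scaled_Ico, lt_0_INR. lia.
Qed.

(* On the grid of mesh 1/(cKL) the rounding loses nothing: [(mK+1)L] is an integer. *)
Lemma grid_point_away (c K L N j m : nat) (x : R) : S N = (c * K * L)%nat -> cell N j x ->
  INR m + / INR K <= INR c * x < INR m + 1 - / INR K ->
  INR m + / INR K <= INR c * (INR j / INR (S N)) <= INR m + 1 - / INR K.
Proof.
  intros HN Hx [Hlo Hhi]. apply cell_iff in Hx.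
  assert (Hpos : (0 < c /\ 0 < K /\ 0 < L)%nat) by (repeat split; nia).
  assert (Hc : 0 < INR c) by (apply lt_0_INR; lia).
  assert (HK : 0 < INR K) by (apply lt_0_INR; lia).
  assert (HL : 0 < INR L) by (apply lt_0_INR; lia).
  assert (HQ : INR (S N) = INR c * INR K * INR L) by (rewrite HN, !mult_INR; reflexivity).
  rewrite HQ in Hx |- *.
  set (s := INR c * (INR j / (INR c * INR K * INR L))).
  assert (Hs : s * (INR K * INR L) = INR j) by (unfold s; field; lra).
  assert (Hround : INR ((m * K + 1) * L) <= INR j).
  { apply le_INR, Nat.lt_succ_r, INR_lt. rewrite S_INR, mult_INR, plus_INR, mult_INR.
    replace ((INR m * INR K + INR 1) * INR L) with ((INR m + / INR K) * (INR K * INR L))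
      by (simpl; field; lra).
    assert (INR K * INR L > 0) by nra.
    assert ((INR m + / INR K) * (INR K * INR L) <= INR c * x * (INR K * INR L))
      by (apply Rmult_le_compat_r; lra).
    lra. }
  rewrite mult_INR, plus_INR, mult_INR in Hround.
  replace ((INR m * INR K + INR 1) * INR L) with ((INR m + / INR K) * (INR K * INR L))
    in Hround by (simpl; field; lra).
  assert (HP : 0 < INR K * INR L) by nra.
  assert (Hxc : INR j <= INR c * x * (INR K * INR L)) by lra.
  set (P := INR K * INR L) in *. set (lo := INR m + / INR K) in *.
  split; nra.
Qed.

Section Defect.

Variable mu : (R -> Prop) -> R.
Hypothesis Hmu : is_prob_measure_T mu.

Lemma defect_eq (n N : nat) :
  defect mu n N = 1 - rs_sum mu (fun x => cos (2 * PI * INR n * x)) N.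
Proof.
  rewrite <- (rs_sum_one mu Hmu N). unfold defect, rs_sum.
  rewrite <- minus_sum. apply sum_eq. intros; ring.
Qed.

Lemma defect_sub (m n N : nat) : (n <= m)%nat ->
  defect mu (m - n) N <= 2 * defect mu m N + 2 * defect mu n N.
Proof.
  intros Hnm. unfold defect, rs_sum. rewrite !scal_sum, <- plus_sum.
  apply sum_Rle. intros j _.
  pose proof (mu_ge0 mu Hmu _ (borel_cell N j)) as Hj. unfold cell in Hj.
  set (w := mu _) in *. set (t := INR j / INR (S N)).
  pose proof (one_sub_cos_sub_le (2 * PI * INR m * t) (2 * PI * INR n * t)).
  rewrite minus_INR by exact Hnm.
  replace (2 * PI * (INR m - INR n) * t) with (2 * PI * INR m * t - 2 * PI * INR n * t) by ring.
  nra.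
Qed.

Lemma defect_ge_away_from_roots (c K L N : nat) : (2 <= K)%nat -> S N = (c * K * L)%nat ->
  (1 - cos (2 * PI / INR K)) * mu (away_from_roots c K) <= defect mu c N.
Proof.
  intros HK HN. set (eta := 1 - cos (2 * PI / INR K)).
  assert (Hc : 0 < INR c) by (apply lt_0_INR; nia).
  assert (Hf : forall x, 0 <= 1 - cos (2 * PI * INR c * x))
    by (intros x; pose proof (COS_bound (2 * PI * INR c * x)); lra).
  eapply Rle_trans; [|exact (rs_sum_markov mu Hmu _ eta N Hf)].
  apply Rmult_le_compat_l; [pose proof (one_sub_cos_pos K HK); unfold eta; lra|].
  apply mu_le; [exact Hmu|apply borel_away_from_roots| |].
  { apply borel_union. intros j. do 2 (apply borel_guard; intros _). apply borel_cell. }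
  intros x Hx. pose proof Hx as [m [Hm Hmx]].
  assert (Hm' : INR m + 1 <= INR c) by (rewrite <- S_INR; apply le_INR; lia).
  destruct (proj1 (cells_cover N x)) as [j [Hj Hjx]].
  { pose proof (pos_INR m). assert (0 < / INR K) by (apply Rinv_0_lt_compat, lt_0_INR; lia).
    split; nra. }
  exists j. split; [exact Hj|split; [|exact Hjx]].
  rewrite Rmult_assoc. unfold eta.
  pose proof (cos_away_from_integers K m _ HK (grid_point_away c K L N j m x HN Hjx Hmx)). lra.
Qed.

Definition defect_le_eventually (n : nat) (eps : R) : Prop :=
  exists N0, forall N, (N0 <= N)%nat -> defect mu n N <= eps.

Lemma away_from_roots_null (c K : nat) : (0 < c)%nat -> (2 <= K)%nat ->
  (forall eps, 0 < eps -> defect_le_eventually c eps) -> mu (away_from_roots c K) = 0.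
Proof.
  intros Hc HK Hsmall.
  pose proof (mu_ge0 mu Hmu _ (borel_away_from_roots c K)) as Hge.
  pose proof (one_sub_cos_pos K HK) as Heta.
  set (eta := 1 - cos (2 * PI / INR K)) in *.
  destruct (Rle_lt_or_eq_dec _ _ Hge) as [Hlt|]; [exfalso|auto].
  destruct (Hsmall (eta * mu (away_from_roots c K) / 2)) as [N0 HN0]; [nra|].
  assert (HQ : S (c * K * S N0 - 1) = (c * K * S N0)%nat) by nia.
  pose proof (defect_ge_away_from_roots c K (S N0) _ HK HQ) as Hge'. fold eta in Hge'.
  specialize (HN0 (c * K * S N0 - 1)%nat ltac:(nia)). nra.
Qed.

(* Together with the points m/c, the sets [away_from_roots c K] with K >= 2 cover [0,1). *)
Lemma vanishing_defect_not_atomless (c : nat) : atomless mu -> (0 < c)%nat ->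
  ~ (forall eps, 0 < eps -> defect_le_eventually c eps).
Proof.
  intros Hat Hc Hsmall.
  assert (Hcr : 0 < INR c) by (apply lt_0_INR, Hc).
  pose (roots := fun m x => x = INR m / INR c).
  pose (away := fun K x => (2 <= K)%nat /\ away_from_roots c K x).
  assert (Hroots : forall m, borel (roots m)) by (intros m; apply borel_point).
  assert (Haway : forall K, borel (away K))
    by (intros K; apply borel_guard; intros _; apply borel_away_from_roots).
  assert (Hnull : mu (fun x => (exists m, roots m x) \/ (exists K, away K x)) = 0).
  { apply mu_null_or; try apply borel_union; auto; apply mu_null_union; auto.
    - intros m. apply Hat.
    - intros K. unfold away. destruct (classic (2 <= K)%nat) as [HK|HK].
      + replace (fun x => (2 <= K)%nat /\ away_from_roots c K x) with (away_from_roots c K)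
          by (apply pred_ext; intros x; tauto).
        apply away_from_roots_null; auto.
      + replace (fun x => (2 <= K)%nat /\ away_from_roots c K x) with (fun _ : R => False)
          by (apply pred_ext; intros x; tauto).
        apply mu_empty, Hmu. }
  assert (Hcover : mu (fun x => 0 <= x < 1) <= 0).
  { rewrite <- Hnull. apply mu_le; auto using borel_Ico.
    { apply borel_or; apply borel_union; auto. }
    intros x [Hx0 Hx1].
    destruct (floor_nat (INR c * x)) as [m [Hm1 Hm2]]; [nra|].
    assert (Hmc : (m < c)%nat) by (apply INR_lt; nra).
    destruct (Req_dec (INR c * x) (INR m)) as [Eq|Ne].
    - left. exists m. unfold roots. field_simplify_eq; lra.
    - right. set (f := INR c * x - INR m).
      destruct (archimed_cor1 (Rmin f (1 - f))) as [K [HKf HK0]];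
        [apply Rmin_glb_lt; unfold f; lra|].
      pose proof (Rmin_l f (1 - f)). pose proof (Rmin_r f (1 - f)).
      assert (HK : (2 <= K)%nat).
      { destruct (Nat.eq_dec K 1) as [->|]; [|lia]. simpl in HKf. rewrite Rinv_1 in HKf.
        unfold f in *. lra. }
      exists K. split; [exact HK|]. exists m. split; [exact Hmc|]. unfold f in *. lra. }
  rewrite (mu_Ico01 mu Hmu) in Hcover. lra.
Qed.

End Defect.

Definition rigid_along (mu : (R -> Prop) -> R) (f : nat -> nat) : Prop :=
  forall eps, 0 < eps -> exists K, forall k, (K <= k)%nat -> defect_le_eventually mu (f k) eps.

Lemma fourier_rigid_along (mu : (R -> Prop) -> R) (f : nat -> nat) (a b : nat -> R) :
  is_prob_measure_T mu -> (forall k, fourier_coeff mu (f k) (a k) (b k)) -> Un_cv a 1 ->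
  rigid_along mu f.
Proof.
  intros Hmu Hf Ha eps Heps. destruct (Ha (eps / 2)) as [K HK]; [lra|].
  exists K. intros k Hk. specialize (HK k Hk). unfold R_dist in HK.
  destruct (Hf k) as [Hcos _]. destruct (Hcos (eps / 2)) as [N0 HN0]; [lra|].
  exists N0. intros N HN. specialize (HN0 N HN). unfold R_dist in HN0.
  rewrite defect_eq by exact Hmu.
  apply Rabs_def2 in HK. apply Rabs_def2 in HN0. lra.
Qed.

Lemma rigid_along_shift (mu : (R -> Prop) -> R) (f : nat -> nat) :
  rigid_along mu f -> rigid_along mu (fun k => f (S k)).
Proof.
  intros H eps Heps. destruct (H eps Heps) as [K HK]. exists K. intros k Hk. apply HK; lia.
Qed.

Lemma rigid_along_sub (mu : (R -> Prop) -> R) (f g : nat -> nat) : is_prob_measure_T mu ->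
  rigid_along mu f -> rigid_along mu g -> (forall k, (g k <= f k)%nat) ->
  rigid_along mu (fun k => f k - g k)%nat.
Proof.
  intros Hmu Hf Hg Hle eps Heps.
  destruct (Hf (eps / 4)) as [K1 H1]; [lra|]. destruct (Hg (eps / 4)) as [K2 H2]; [lra|].
  exists (max K1 K2). intros k Hk.
  destruct (H1 k ltac:(lia)) as [N1 HN1]. destruct (H2 k ltac:(lia)) as [N2 HN2].
  exists (max N1 N2). intros N HN.
  pose proof (defect_sub mu Hmu (f k) (g k) N (Hle k)).
  specialize (HN1 N ltac:(lia)). specialize (HN2 N ltac:(lia)). lra.
Qed.

Definition delta (f : nat -> nat) (k : nat) : nat := f (S k) - f k.

(* [delta_pos d f]: the differences [f, delta f, ..., delta^(d-1) f] are nondecreasing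
   (so that the truncated subtraction in [delta] is exact) and [delta^d f] is a positive
   constant. *)
Fixpoint delta_pos (d : nat) (f : nat -> nat) : Prop :=
  match d with
  | O => exists c, (0 < c)%nat /\ forall k, f k = c
  | S d' => (forall k, (f k <= f (S k))%nat) /\ delta_pos d' (delta f)
  end.

Lemma delta_pos_mono (d : nat) (f : nat -> nat) : delta_pos d f -> forall k, (f k <= f (S k))%nat.
Proof.
  destruct d as [|d]; simpl.
  - intros [c [_ Hc]] k. rewrite !Hc. lia.
  - intros [Hm _]. exact Hm.
Qed.

Lemma delta_pos_shift (d : nat) : forall f, delta_pos d f -> delta_pos d (fun k => f (S k)).
Proof.
  induction d as [|d IH]; simpl; intros f H.
  - destruct H as [c [Hc Hk]]. exists c; auto.
  - destruct H as [Hm HQ]. split; auto. exact (IH _ HQ).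
Qed.

Lemma delta_pos_add (d : nat) : forall f g,
  delta_pos d f -> delta_pos d g -> delta_pos d (fun k => f k + g k)%nat.
Proof.
  induction d as [|d IH]; simpl; intros f g Hf Hg.
  - destruct Hf as [c [Hc Hk]], Hg as [c' [Hc' Hk']]. exists (c + c')%nat.
    split; [lia|]. intros k. rewrite Hk, Hk'. reflexivity.
  - destruct Hf as [Hm HQ], Hg as [Hm' HQ'].
    split; [intros k; specialize (Hm k); specialize (Hm' k); lia|].
    replace (delta (fun k => f k + g k)%nat) with (fun k => delta f k + delta g k)%nat
      by (apply functional_extensionality; intros k; unfold delta;
          specialize (Hm k); specialize (Hm' k); lia).
    exact (IH _ _ HQ HQ').
Qed.

Lemma delta_pos_add_const (d c : nat) (f : nat -> nat) :
  delta_pos d f -> delta_pos d (fun k => c + f k)%nat.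
Proof.
  destruct d as [|d]; simpl; intros Hf.
  - destruct Hf as [c0 [Hc Hk]]. exists (c + c0)%nat.
    split; [lia|]. intros k; rewrite Hk; reflexivity.
  - destruct Hf as [Hm HQ]. split; [intros k; specialize (Hm k); lia|].
    replace (delta (fun k => c + f k)%nat) with (delta f)
      by (apply functional_extensionality; intros k; unfold delta; lia).
    exact HQ.
Qed.

Lemma delta_mul_id (f : nat -> nat) : (forall k, (f k <= f (S k))%nat) ->
  delta (fun k => k * f k)%nat = (fun k => f (S k) + k * delta f k)%nat.
Proof.
  intros Hm. apply functional_extensionality. intros k. unfold delta.
  specialize (Hm k). rewrite Nat.mul_sub_distr_l. simpl. nia.
Qed.

Lemma delta_pos_mul_id (d : nat) :
  forall f, delta_pos d f -> delta_pos (S d) (fun k => k * f k)%nat.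
Proof.
  induction d as [|d IH]; intros f Hf; pose proof (delta_pos_mono _ f Hf) as Hm;
    (split; [intros k; specialize (Hm k); nia|]); rewrite delta_mul_id by exact Hm.
  - destruct Hf as [c [Hc Hk]]. exists c.
    split; [exact Hc|]. intros k. unfold delta. rewrite !Hk. lia.
  - apply delta_pos_add; [exact (delta_pos_shift _ _ Hf)|exact (IH _ (proj2 Hf))].
Qed.

Lemma rigid_along_delta_pos (mu : (R -> Prop) -> R) (d : nat) : is_prob_measure_T mu ->
  forall f, delta_pos d f -> rigid_along mu f ->
  exists c, (0 < c)%nat /\ forall eps, 0 < eps -> defect_le_eventually mu c eps.
Proof.
  intros Hmu. induction d as [|d IH]; simpl; intros f Hf Hrig.
  - destruct Hf as [c [Hc Hk]]. exists c. split; [exact Hc|]. intros eps Heps.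
    destruct (Hrig eps Heps) as [K HK]. rewrite <- (Hk K). exact (HK K (le_n K)).
  - destruct Hf as [Hm HQ]. apply (IH _ HQ).
    exact (rigid_along_sub mu _ f Hmu (rigid_along_shift mu f Hrig) Hrig Hm).
Qed.

Lemma peval_cons (c : nat) (cs : list nat) (k : nat) : peval (c :: cs) k = (c + k * peval cs k)%nat.
Proof. reflexivity. Qed.

Lemma peval_zero_coeffs (cs : list nat) :
  (forall i, nth i cs 0%nat = 0%nat) -> forall k, peval cs k = 0%nat.
Proof.
  induction cs as [|c cs IH]; intros Hz k; [reflexivity|].
  pose proof (Hz 0%nat) as Hc. simpl in Hc.
  rewrite peval_cons, Hc, IH; [lia|]. intros i. exact (Hz (S i)).
Qed.

Lemma delta_pos_peval (cs : list nat) :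
  (exists i, nth i cs 0%nat <> 0%nat) -> exists d, delta_pos d (peval cs).
Proof.
  induction cs as [|c cs IH]; intros [i Hi]; [destruct i; contradiction|].
  destruct (classic (exists i, nth i cs 0%nat <> 0%nat)) as [Hcs|Hcs].
  - destruct (IH Hcs) as [d Hd]. exists (S d).
    change (delta_pos (S d) (fun k => c + k * peval cs k)%nat).
    apply delta_pos_add_const, delta_pos_mul_id, Hd.
  - assert (Hz : forall i, nth i cs 0%nat = 0%nat)
      by (intros j; apply NNPP; intros Hj; apply Hcs; exists j; exact Hj).
    assert (Hc : c <> 0%nat)
      by (destruct i as [|i]; [exact Hi|simpl in Hi; rewrite Hz in Hi; contradiction]).
    exists 0%nat, c. split; [lia|].
    intros k. rewrite peval_cons, peval_zero_coeffs by exact Hz. lia.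
Qed.

Theorem mainTheorem12 (cs : list nat) (Hnc : nonconstant cs) :
  ~ (exists (mu : (R -> Prop) -> R) (a b : nat -> R),
       is_prob_measure_T mu /\ atomless mu /\
       (forall k, fourier_coeff mu (peval cs k) (a k) (b k)) /\
       Un_cv a 1 /\ Un_cv b 0).
Proof.
  intros [mu [a [b [Hmu [Hat [Hf [Ha _]]]]]]].
  destruct (delta_pos_peval cs) as [d Hd].
  { destruct Hnc as [i [_ Hi]]. exists i. exact Hi. }
  destruct (rigid_along_delta_pos mu d Hmu _ Hd (fourier_rigid_along mu _ a b Hmu Hf Ha))
    as [c [Hc Hvanish]].
  exact (vanishing_defect_not_atomless mu Hmu c Hat Hc Hvanish).
Qed.
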